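(* Let $n\ge2$, $\preceq$ an admissible order on $L([0,1])$, $F\colon L([0,1])^2\to L([0,1])$, $G\colon L([0,1])^n\to L([0,1])$. The IV Sugeno-like $FG$-functional $\mathbf S_m^{F,G}$ is an $n$-dimensional IV aggregation function w.r.t. $\preceq$ for every IV fuzzy measure $m$ whenever: (i) $F(\cdot,\mathbf1)$ is non-decreasing, $F(\mathbf0,\mathbf1)=\mathbf0$, $F(\mathbf1,\mathbf1)=\mathbf1$, and $G=f\circ\mathrm{Proj}_1$ with $f\colon L([0,1])\to L([0,1])$ non-decreasing, $f(\mathbf0)=\mathbf0$, $f(\mathbf1)=\mathbf1$; or (ii) $F(\mathbf0,Y)=\mathbf0$ for all $Y\in L([0,1])$, $F(\mathbf1,\mathbf1)=\mathbf1$, $F$ is non-decreasing (in each variable), and $G=f\circ\vee$ with $f$ non-decreasing, $f(\mathbf0)=\mathbf0$, $f(\mathbf1)=\mathbf1$.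
   Context: $N=\{1,\dots,n\}$. $L([0,1])=\{[a,b]:0\le a\le b\le1\}$, $\mathbf0=[0,0]$, $\mathbf1=[1,1]$. An admissible order $\preceq$ is a total order on $L([0,1])$ with $[a,b]\preceq[c,d]$ whenever $a\le c$, $b\le d$. $\vee$ denotes maximum w.r.t. $\preceq$; monotonicity is w.r.t. $\preceq$; $\mathrm{Proj}_1(X_1,\dots,X_n)=X_1$. An $n$-dimensional IV aggregation function w.r.t. $\preceq$ is $M\colon L([0,1])^n\to L([0,1])$ with $M(\mathbf0,\dots,\mathbf0)=\mathbf0$, $M(\mathbf1,\dots,\mathbf1)=\mathbf1$, non-decreasing in each component w.r.t. $\preceq$. An IV fuzzy measure w.r.t. $\preceq$ is $m\colon2^N\to L([0,1])$, $m(\emptyset)=\mathbf0$, $m(N)=\mathbf1$, $m(A)\preceq m(B)$ for $A\subseteq B$. For a permutation $\sigma$, $E_{\sigma(i)}=\{\sigma(i),\dots,\sigma(n)\}$. $\mathbf S_m^{F,G}(X_1,\dots,X_n)=G\big(F(X_{\sigma(1)},m(E_{\sigma(1)})),\dots,F(X_{\sigma(n)},m(E_{\sigma(n)}))\big)$ with $\sigma$ any permutation such that $X_{\sigma(1)}\preceq\dots\preceq X_{\sigma(n)}$; it is defined when this value does not depend on the choice of $\sigma$ for all inputs. *)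

From HB Require Import structures.
From mathcomp Require Import all_boot all_order all_algebra all_fingroup.
From mathcomp Require Import reals.
Set Implicit Arguments. Unset Strict Implicit. Unset Printing Implicit Defensive.
Import Order.TTheory GRing.Theory Num.Theory.
Local Open Scope ring_scope.

Record ivl (R : realType) := Ivl {
  lo : R; hi : R;
  ivl_ok : [&& 0 <= lo, lo <= hi & hi <= 1] }.

Lemma ivl0_ok (R : realType) : [&& (0:R) <= 0, (0:R) <= 0 & (0:R) <= 1].
Proof. by rewrite lexx ler01. Qed.
Lemma ivl1_ok (R : realType) : [&& (0:R) <= 1, (1:R) <= 1 & (1:R) <= 1].
Proof. by rewrite lexx ler01. Qed.

Definition iv0 (R : realType) : ivl R := Ivl (ivl0_ok R).
Definition iv1 (R : realType) : ivl R := Ivl (ivl1_ok R).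

Definition admissible (R : realType) (le : ivl R -> ivl R -> bool) : Prop :=
  [/\ (forall x, le x x),
      (forall x y, le x y -> le y x -> x = y),
      (forall x y z, le x y -> le y z -> le x z),
      (forall x y, le x y || le y x) &
      (forall x y, lo x <= lo y -> hi x <= hi y -> le x y)].

Definition iv_aggregation (R : realType) (n : nat) (le : ivl R -> ivl R -> bool)
    (M : ('I_n -> ivl R) -> ivl R) : Prop :=
  [/\ M (fun _ => iv0 R) = iv0 R,
      M (fun _ => iv1 R) = iv1 R &
      (forall (X : 'I_n -> ivl R) (i : 'I_n) (y : ivl R), le (X i) y ->
         le (M X) (M (fun j => if j == i then y else X j)))].

Definition iv_fuzzy_measure (R : realType) (n : nat) (le : ivl R -> ivl R -> bool)
    (m : {set 'I_n} -> ivl R) : Prop :=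
  [/\ m set0 = iv0 R, m setT = iv1 R &
      (forall A B : {set 'I_n}, A \subset B -> le (m A) (m B))].

Definition sorting (R : realType) (n : nat) (le : ivl R -> ivl R -> bool)
    (X : 'I_n -> ivl R) (s : 'S_n) : Prop :=
  forall i j : 'I_n, (i <= j)%N -> le (X (s i)) (X (s j)).

Definition Eset (n : nat) (s : 'S_n) (i : 'I_n) : {set 'I_n} :=
  [set s j | j : 'I_n & (i <= j)%N].

Definition sugeno_val (R : realType) (n : nat)
    (F : ivl R -> ivl R -> ivl R) (G : ('I_n -> ivl R) -> ivl R)
    (m : {set 'I_n} -> ivl R) (X : 'I_n -> ivl R) (s : 'S_n) : ivl R :=
  G (fun i => F (X (s i)) (m (Eset s i))).

(* S_m^{F,G} is well defined (independent of the sorting permutation) and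
   M is the resulting function. *)
Definition sugeno_functional (R : realType) (n : nat) (le : ivl R -> ivl R -> bool)
    (F : ivl R -> ivl R -> ivl R) (G : ('I_n -> ivl R) -> ivl R)
    (m : {set 'I_n} -> ivl R) (M : ('I_n -> ivl R) -> ivl R) : Prop :=
  (forall X s1 s2, sorting le X s1 -> sorting le X s2 ->
      sugeno_val F G m X s1 = sugeno_val F G m X s2) /\
  (forall X s, sorting le X s -> M X = sugeno_val F G m X s).

Definition is_vmax (R : realType) (n : nat) (le : ivl R -> ivl R -> bool)
    (X : 'I_n -> ivl R) (Y : ivl R) : Prop :=
  (exists i, Y = X i) /\ (forall j, le (X j) Y).

From HB Require Import structures.
From mathcomp Require Import all_boot all_order all_algebra all_fingroup.
From mathcomp Require Import reals.
Import Order.TTheory GRing.Theory Num.Theory.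
Set Implicit Arguments. Unset Strict Implicit.

(* Let sigma sort X increasingly. Then E_sigma(1) = N and X_sigma(1) is the
   least value of X, so under (i) the functional is f (F (min X) 1).  Under (ii)
   each E_sigma(i) lies in the upper set {k | X_sigma(i) <= X_k}, with equality
   at the first position where a value occurs; as F is monotone in its second
   argument, the functional is f (max_j F X_j (m {k | X_j <= X_k})).  Neither
   closed form mentions sigma, and both are monotone in X. *)

Section TotalPreorderExtrema.

Variables (T : Type) (le : rel T).
Hypotheses (le_refl : reflexive le) (le_trans : transitive le) (le_total : total le).

Definition argmin (I : finType) (P : pred I) (g : I -> T) (i0 : I) : I :=
  extremum (relpre g le) i0 P id.

Definition argmax (I : finType) (P : pred I) (g : I -> T) (i0 : I) : I :=
  extremum (relpre g (fun x y => le y x)) i0 P id.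

Variables (I : finType) (P : pred I) (g : I -> T) (i0 : I).
Hypothesis P_i0 : P i0.

Lemma argminP : extremum_spec (relpre g le) P id (argmin P g i0).
Proof.
apply: extremumP => // [i|y x z|i j].
- exact: le_refl.
- exact: le_trans.
- exact: le_total.
Qed.

Lemma argmaxP : extremum_spec (relpre g (fun x y => le y x)) P id (argmax P g i0).
Proof.
apply: extremumP => // [i|y x z|i j].
- exact: le_refl.
- exact: (rev_trans le_trans).
- exact: le_total.
Qed.

End TotalPreorderExtrema.

Section SugenoFunctional.

Variables (R : realType) (n : nat) (le : rel (ivl R)).
Hypotheses (le_refl : reflexive le) (le_trans : transitive le) (le_total : total le).
Hypothesis le_anti : forall x y, le x y -> le y x -> x = y.

Variables (n_gt0 : (0 < n)%N) (m : {set 'I_n} -> ivl R).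
Hypotheses (m1 : m setT = iv1 R)
  (m_mono : forall A B : {set 'I_n}, A \subset B -> le (m A) (m B)).

Variables (F : ivl R -> ivl R -> ivl R) (G : ('I_n -> ivl R) -> ivl R).
Variable f : ivl R -> ivl R.
Hypotheses (f_mono : forall x y, le x y -> le (f x) (f y))
  (f0 : f (iv0 R) = iv0 R) (f1 : f (iv1 R) = iv1 R).

Local Notation i0 := (Ordinal n_gt0).

Lemma sugeno_functional_of_val (M : ('I_n -> ivl R) -> ivl R) :
    (forall X s, sorting le X s -> sugeno_val F G m X s = M X) ->
  sugeno_functional le F G m M.
Proof. by move=> valM; split=> [X s1 s2 /valM-> /valM->|X s /valM->]. Qed.

Lemma iv_aggregation_of_pointwise (M : ('I_n -> ivl R) -> ivl R) :
    M (fun _ => iv0 R) = iv0 R -> M (fun _ => iv1 R) = iv1 R ->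
    (forall X X', (forall k, le (X k) (X' k)) -> le (M X) (M X')) ->
  iv_aggregation le M.
Proof.
move=> M0 M1 M_mono; split=> // X i y Xi_le_y; apply: M_mono => k.
by case: eqP => [->|_].
Qed.

Lemma Eset_first (s : 'S_n) : Eset s i0 = setT.
Proof.
apply/setP => k; rewrite inE; apply/imsetP; exists (s^-1 k)%g => //.
by rewrite permKV.
Qed.

Lemma sorting_first_min X s : sorting le X s -> forall j, le (X (s i0)) (X j).
Proof. by move=> X_sorted j; rewrite -(permKV s j); apply: X_sorted. Qed.

Section FirstProjection.

Hypotheses (F01 : F (iv0 R) (iv1 R) = iv0 R) (F11 : F (iv1 R) (iv1 R) = iv1 R)
  (F_mono1 : forall x y, le x y -> le (F x (iv1 R)) (F y (iv1 R))).
Hypothesis G_proj : forall X, G X = f (X i0).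

Definition sugeno_proj (X : 'I_n -> ivl R) : ivl R :=
  f (F (X (argmin le predT X i0)) (iv1 R)).

Lemma sugeno_val_proj X s : sorting le X s -> sugeno_val F G m X s = sugeno_proj X.
Proof.
move=> X_sorted; rewrite /sugeno_val G_proj Eset_first m1; congr (f (F _ _)).
case: argminP => // i _ i_min; apply: le_anti; last exact: i_min.
exact: sorting_first_min.
Qed.

Lemma sugeno_proj_mono X X' :
  (forall k, le (X k) (X' k)) -> le (sugeno_proj X) (sugeno_proj X').
Proof.
move=> le_XX'; apply/f_mono/F_mono1.
case: argminP => // i _ i_min; case: argminP => // i' _ _.
exact: le_trans (i_min i' isT) (le_XX' i').
Qed.

Lemma sugeno_proj_aggregation :
  exists M, sugeno_functional le F G m M /\ iv_aggregation le M.
Proof.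
exists sugeno_proj; split; first exact/sugeno_functional_of_val/sugeno_val_proj.
apply: iv_aggregation_of_pointwise; last exact: sugeno_proj_mono.
- by rewrite /sugeno_proj F01 f0.
- by rewrite /sugeno_proj F11 f1.
Qed.

End FirstProjection.

Section MaximumOfValues.

Hypotheses (F0 : forall y, F (iv0 R) y = iv0 R) (F11 : F (iv1 R) (iv1 R) = iv1 R)
  (F_mono1 : forall x x' y, le x x' -> le (F x y) (F x' y))
  (F_mono2 : forall x y y', le y y' -> le (F x y) (F x y')).
Hypothesis G_max : forall X Y, is_vmax le X Y -> G X = f Y.

Definition upset (X : 'I_n -> ivl R) (j : 'I_n) : {set 'I_n} :=
  [set k | le (X j) (X k)].

Definition upset_weight (X : 'I_n -> ivl R) (j : 'I_n) : ivl R :=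
  F (X j) (m (upset X j)).

Definition max_upset_weight (X : 'I_n -> ivl R) : ivl R :=
  upset_weight X (argmax le predT (upset_weight X) i0).

Lemma Eset_sub_upset X s i : sorting le X s -> Eset s i \subset upset X (s i).
Proof.
move=> X_sorted; apply/subsetP => k /imsetP[l]; rewrite inE => le_il ->.
by rewrite inE; apply: X_sorted.
Qed.

Lemma Eset_first_above X s j : sorting le X s ->
  exists i, X (s i) = X j /\ Eset s i = upset X j.
Proof.
move=> X_sorted; pose above_j i := le (X j) (X (s i)).
have above_j_inv : above_j (s^-1 j)%g by rewrite /above_j permKV.
case: (arg_minnP (fun i : 'I_n => i : nat) above_j_inv) => i le_ji i_min.
exists i; split.
  apply: le_anti le_ji; rewrite -[in X j](permKV s j); apply/X_sorted/i_min.
  by rewrite /above_j permKV.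
apply/setP => k; rewrite inE; apply/imsetP/idP => [[l]|le_jk].
  by rewrite inE => le_il ->; apply: le_trans le_ji (X_sorted _ _ le_il).
exists (s^-1 k)%g; last by rewrite permKV.
by rewrite inE; apply: i_min; rewrite /above_j permKV.
Qed.

Lemma sugeno_val_max X s :
  sorting le X s -> sugeno_val F G m X s = f (max_upset_weight X).
Proof.
move=> X_sorted; apply: G_max; split.
  have [i [Xi Ei]] := Eset_first_above (argmax le predT (upset_weight X) i0)
    X_sorted.
  by exists i; rewrite /max_upset_weight /upset_weight /= Xi Ei.
move=> i; rewrite /max_upset_weight; case: argmaxP => // j _ j_max.
apply: le_trans (j_max (s i) isT).
exact/F_mono2/m_mono/Eset_sub_upset.
Qed.

(* The weight of [j] for [X] is dominated by that of the [X']-least index above [j]. *)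
Lemma max_upset_weight_mono X X' : (forall k, le (X k) (X' k)) ->
  le (max_upset_weight X) (max_upset_weight X').
Proof.
move=> le_XX'; rewrite /max_upset_weight.
case: (argmaxP le_refl le_trans le_total (upset_weight X) (isT : predT i0)) => j _ _.
have j_above : j \in upset X j by rewrite inE.
case: (argminP le_refl le_trans le_total (P := mem (upset X j)) X' j_above).
move=> k /[!inE] le_jk k_min.
case: argmaxP => // j' _ j'_max; apply: le_trans (j'_max k isT).
apply: le_trans (F_mono1 _ (le_trans le_jk (le_XX' k))) _.
by apply/F_mono2/m_mono/subsetP => l /k_min; rewrite inE.
Qed.

Lemma sugeno_max_aggregation :
  exists M, sugeno_functional le F G m M /\ iv_aggregation le M.
Proof.
exists (f \o max_upset_weight); split.
  exact/sugeno_functional_of_val/sugeno_val_max.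
apply: iv_aggregation_of_pointwise => [||X X' le_XX'].
- by rewrite /= /max_upset_weight /upset_weight F0 f0.
- have upsetT j : upset (fun=> iv1 R) j = setT.
    by apply/setP => k; rewrite !inE le_refl.
  by rewrite /= /max_upset_weight /upset_weight upsetT m1 F11 f1.
- exact/f_mono/max_upset_weight_mono.
Qed.

End MaximumOfValues.

End SugenoFunctional.

Theorem corollary6 (R : realType) (n : nat) (hn : (2 <= n)%N)
    (le : ivl R -> ivl R -> bool) (F : ivl R -> ivl R -> ivl R)
    (G : ('I_n -> ivl R) -> ivl R) :
  admissible le ->
  ( (* (i) *)
    ((forall x y, le x y -> le (F x (iv1 R)) (F y (iv1 R))) /\
     F (iv0 R) (iv1 R) = iv0 R /\ F (iv1 R) (iv1 R) = iv1 R /\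
     exists f : ivl R -> ivl R,
       (forall x y, le x y -> le (f x) (f y)) /\ f (iv0 R) = iv0 R /\
       f (iv1 R) = iv1 R /\
       (forall X, G X = f (X (Ordinal (ltnW hn)))))
  \/ (* (ii) *)
    ((forall Y, F (iv0 R) Y = iv0 R) /\ F (iv1 R) (iv1 R) = iv1 R /\
     (forall x x' y, le x x' -> le (F x y) (F x' y)) /\
     (forall x y y', le y y' -> le (F x y) (F x y')) /\
     exists f : ivl R -> ivl R,
       (forall x y, le x y -> le (f x) (f y)) /\ f (iv0 R) = iv0 R /\
       f (iv1 R) = iv1 R /\
       (forall X Y, is_vmax le X Y -> G X = f Y)) ) ->
  forall m : {set 'I_n} -> ivl R, iv_fuzzy_measure le m ->
    exists M : ('I_n -> ivl R) -> ivl R,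
      sugeno_functional le F G m M /\ iv_aggregation le M.
Proof.
move=> [le_refl le_anti le_trans le_total _].
have le_tr : transitive le by move=> y x z; apply: le_trans.
case=> [[F_mono1 [F01 [F11 [f [f_mono [f0 [f1 G_proj]]]]]]]
       |[F0 [F11 [F_mono1 [F_mono2 [f [f_mono [f0 [f1 G_max]]]]]]]]]
       m [_ m1 m_mono].
- exact: (sugeno_proj_aggregation le_refl le_tr le_total le_anti m1 f_mono f0 f1
          F01 F11 F_mono1 G_proj).
- exact: (sugeno_max_aggregation le_refl le_tr le_total le_anti (ltnW hn) m1 m_mono
          f_mono f0 f1 F0 F11 F_mono1 F_mono2 G_max).
Qed.
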